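(* Let $\mathcal{H}$ be a complex Hilbert space and let $T\in\mathcal{B}(\mathcal{H})$ be a completely hyperexpansive operator which is $A_j(T)$-regular for $j=1,2,3$, where $A_n(T)=-\sum_{k=0}^n(-1)^k\binom{n}{k}T^{*k}T^k$. Then the compression $P_{\overline{\mathcal{R}(A_2(T))}}T|_{\overline{\mathcal{R}(A_2(T))}}$ of $T$ to $\overline{\mathcal{R}(A_2(T))}$ is a completely non-isometric quasinormal contraction.
   Context: $T$ is completely hyperexpansive if $\sum_{k=0}^n(-1)^k\binom{n}{k}T^{*k}T^k\le0$ for all $n\ge1$; note $A_1(T)=T^*T-I$. For a positive operator $A$, $T$ is $A$-regular if $AT=A^{1/2}TA^{1/2}$. An operator $Q$ is quasinormal if $QQ^*Q=Q^*Q^2$. A contraction is completely non-isometric if there is no nonzero invariant subspace on which it acts isometrically. *)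

From HB Require Import structures.
From mathcomp Require Import all_boot all_order all_algebra.
From mathcomp Require Import complex.
From mathcomp Require Import reals.
Set Implicit Arguments. Unset Strict Implicit. Unset Printing Implicit Defensive.
Import Order.TTheory GRing.Theory Num.Theory.
Local Open Scope ring_scope.

Section Hilbert.
Variables (R : realType) (V : lmodType R[i]) (inner : V -> V -> R[i]).

Definition nsq (x : V) : R := complex.Re (inner x x).

Definition is_hilbert : Prop :=
  [/\ (forall (a : R[i]) (x y z : V), inner (a *: x + y) z = a * inner x z + inner y z),
      (forall x y : V, inner y x = complex.conjc (inner x y)),
      (forall x : V, complex.Im (inner x x) = 0 /\ 0 <= complex.Re (inner x x)),
      (forall x : V, inner x x = 0 -> x = 0) &
      (forall u : nat -> V,
         (forall e : R, 0 < e -> exists N, forall m n, (N <= m)%N -> (N <= n)%N ->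
              nsq (u m - u n) < e) ->
         exists l : V, forall e : R, 0 < e -> exists N, forall n, (N <= n)%N ->
              nsq (u n - l) < e)].

Definition bounded (T : V -> V) : Prop :=
  exists K : R, forall x, nsq (T x) <= K * nsq x.

Definition is_adjoint (T Tstar : V -> V) : Prop :=
  forall x y, inner (T x) y = inner x (Tstar y).

Definition pos_op (B : V -> V) : Prop :=
  forall x, complex.Im (inner (B x) x) = 0 /\ 0 <= complex.Re (inner (B x) x).

Definition Aop (T Tstar : V -> V) (n : nat) : V -> V :=
  fun x => - \sum_(k < n.+1) ((-1) ^+ k * ('C(n, k))%:R) *: iter k Tstar (iter k T x).

Definition completely_hyperexpansive (T Tstar : V -> V) : Prop :=
  forall n, (1 <= n)%N -> pos_op (Aop T Tstar n).

Definition is_pos_sqrt (A B : V -> V) : Prop :=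
  linear B /\ bounded B /\ pos_op B /\ (forall x, B (B x) = A x).

Definition regular (A T : V -> V) : Prop :=
  exists B, is_pos_sqrt A B /\ forall x, A (T x) = B (T (B x)).

Definition subspace (M : V -> Prop) : Prop :=
  M 0 /\ (forall (a : R[i]) x y, M x -> M y -> M (a *: x + y)).
Definition closed (M : V -> Prop) : Prop :=
  forall x, (forall e : R, 0 < e -> exists y, M y /\ nsq (x - y) < e) -> M x.

Definition closure_range (B : V -> V) : V -> Prop :=
  fun x => forall e : R, 0 < e -> exists y, nsq (x - B y) < e.

Definition orth_proj (M : V -> Prop) (P : V -> V) : Prop :=
  forall x, M (P x) /\ (forall y, M y -> inner (x - P x) y = 0).

(* Operators S on the (closed) subspace M, represented as maps V -> V
   sending M into M, only their values on M being relevant. *)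
Definition maps_into (M : V -> Prop) (S : V -> V) : Prop := forall x, M x -> M (S x).

Definition adjoint_on (M : V -> Prop) (S Sstar : V -> V) : Prop :=
  maps_into M Sstar /\ forall x y, M x -> M y -> inner (S x) y = inner x (Sstar y).

Definition contraction_on (M : V -> Prop) (S : V -> V) : Prop :=
  forall x, M x -> nsq (S x) <= nsq x.

Definition quasinormal_on (M : V -> Prop) (S : V -> V) : Prop :=
  forall Sstar, adjoint_on M S Sstar ->
    forall x, M x -> S (Sstar (S x)) = Sstar (S (S x)).

Definition completely_non_isometric_on (M : V -> Prop) (S : V -> V) : Prop :=
  forall N : V -> Prop, subspace N -> closed N -> (forall x, N x -> M x) ->
    maps_into N S -> (forall x, N x -> nsq (S x) = nsq x) ->
    forall x, N x -> x = 0.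

End Hilbert.

(* Write B for the positive square root of A_2(T) and M for the closure of its range.
   Since ker B is the orthogonal complement of M, B is injective on M, and regularity
   A_2 T = B T B yields P T B = B T: the compression S = P T|_M is intertwined with T by B.
   Now |B x|^2 = <A_2 x, x>, and complete hyperexpansivity makes <A_2 T^j x, T^j x>
   nonincreasing in j with j <A_2 T^j x, T^j x> <= <A_1 x, x>.  Hence S is contractive on
   the dense range of A_2 = B^2, so on M, and S^n A_2 x -> 0, which leaves no room for an
   invariant subspace on which S is isometric.  For quasinormality, with D = I - S^*S on M
   one gets A_3 = B D B, while regularity for A_3 gives A_3 T = S A_3; injectivity of B and
   A_3 on M turns this into D S = S D, that is S S^*S = S^*S S. *)

From Pilot Require Import Defs.
From HB Require Import structures.
From mathcomp Require Import all_boot all_order all_algebra.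
From mathcomp Require Import complex.
From mathcomp Require Import reals.
From mathcomp Require Import ring lra.
Import Order.TTheory GRing.Theory Num.Theory.
Local Open Scope ring_scope.
Local Open Scope complex_scope.
Set Implicit Arguments. Unset Strict Implicit. Unset Printing Implicit Defensive.

Section ComplexParts.
Variable R : realType.
Implicit Types (a : R) (z w : R[i]).

Lemma ReD z w : complex.Re (z + w) = complex.Re z + complex.Re w.
Proof. by case: z; case: w. Qed.

Lemma ReN z : complex.Re (- z) = - complex.Re z.
Proof. by case: z. Qed.

Lemma ReB z w : complex.Re (z - w) = complex.Re z - complex.Re w.
Proof. by rewrite ReD ReN. Qed.

Lemma Re_conjc z : complex.Re (conjc z) = complex.Re z.
Proof. by case: z. Qed.

Lemma Re_realM a z : complex.Re (a%:C * z) = a * complex.Re z.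
Proof. by case: z => x y /=; rewrite mul0r subr0. Qed.

Lemma Re_conjcM z : complex.Re (conjc z * z) = complex.Re z ^+ 2 + complex.Im z ^+ 2.
Proof. by case: z => x y /=; ring. Qed.

Lemma complex_Re_real z : complex.Im z = 0 -> z = (complex.Re z)%:C.
Proof. by case: z => x y /= ->. Qed.

Lemma conjc_Im0 z : complex.Im z = 0 -> conjc z = z.
Proof. by case: z => x y /= ->; rewrite oppr0. Qed.

Lemma conjc_i : conjc 'i = - 'i :> R[i].
Proof. by apply/eqP; rewrite eq_complex /= oppr0 !eqxx. Qed.

End ComplexParts.

Section RealBounds.
Variable R : realType.
Implicit Types x y c : R.

Lemma ler_add_eps_mul x y c :
  (forall d, 0 < d -> d <= 1 -> x <= y + d * c) -> x <= y.
Proof.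
move=> h; apply/ler_addgt0Pr => e he.
have [c_le0 | c_gt0] := lerP c 0.
  by apply: le_trans (h 1 ltr01 (lexx 1)) _; rewrite mul1r lerD2l (le_trans c_le0) ?ltW.
pose d := Num.min 1 (e / c).
have d_gt0 : 0 < d by rewrite lt_min ltr01 divr_gt0.
have d_le1 : d <= 1 by rewrite ge_min lexx.
apply: le_trans (h d d_gt0 d_le1) _.
by rewrite lerD2l -ler_pdivlMr // ge_min lexx orbT.
Qed.

Lemma le0_natrM_bounded x c : (forall n : nat, n%:R * x <= c) -> x <= 0.
Proof.
move=> h; rewrite leNgt; apply/negP => x_gt0.
have c_ge0 : 0 <= c by have := h 0%N; rewrite mul0r.
have := archi_boundP (divr_ge0 c_ge0 (ltW x_gt0)).
set n := Num.Def.archi_bound _ => hn.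
by have := h n; rewrite leNgt -ltr_pdivrMr // hn.
Qed.

End RealBounds.

Section InnerProduct.
Variables (R : realType) (V : lmodType R[i]) (inner : V -> V -> R[i]).
Hypothesis HV : is_hilbert inner.
Local Notation nsq := (nsq inner).
Implicit Types x y z : V.

Lemma innerC x y : inner y x = conjc (inner x y).
Proof. by case: HV => _ h _ _ _; apply: h. Qed.

Lemma inner_linear_l a x y z : inner (a *: x + y) z = a * inner x z + inner y z.
Proof. by case: HV => h _ _ _ _; apply: h. Qed.

Lemma inner0l z : inner 0 z = 0.
Proof.
have := inner_linear_l 1 0 0 z; rewrite scaler0 addr0 mul1r => h.
by apply: (addrI (inner 0 z)); rewrite addr0 -h.
Qed.

Lemma innerDl x y z : inner (x + y) z = inner x z + inner y z.
Proof. by rewrite -[x]scale1r inner_linear_l mul1r scale1r. Qed.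

Lemma innerZl a x z : inner (a *: x) z = a * inner x z.
Proof. by rewrite -[a *: x]addr0 inner_linear_l inner0l addr0. Qed.

Lemma innerNl x z : inner (- x) z = - inner x z.
Proof. by rewrite -scaleN1r innerZl mulN1r. Qed.

Lemma innerBl x y z : inner (x - y) z = inner x z - inner y z.
Proof. by rewrite innerDl innerNl. Qed.

Lemma innerDr x y z : inner z (x + y) = inner z x + inner z y.
Proof. by rewrite innerC innerDl rmorphD (innerC x z) (innerC y z). Qed.

Lemma innerZr a x z : inner z (a *: x) = conjc a * inner z x.
Proof. by rewrite innerC innerZl rmorphM (innerC x z). Qed.

Lemma innerNr x z : inner z (- x) = - inner z x.
Proof. by rewrite innerC innerNl rmorphN (innerC x z). Qed.

Lemma innerBr x y z : inner z (x - y) = inner z x - inner z y.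
Proof. by rewrite innerDr innerNr. Qed.

Lemma inner_suml n (F : 'I_n -> V) z :
  inner (\sum_(i < n) F i) z = \sum_(i < n) inner (F i) z.
Proof. by elim/big_rec2: _ => [|i y1 y2 _ <-]; rewrite ?inner0l ?innerDl. Qed.

Lemma Re_innerC x y : complex.Re (inner y x) = complex.Re (inner x y).
Proof. by rewrite innerC Re_conjc. Qed.

Lemma inner_self x : inner x x = (nsq x)%:C.
Proof. by case: HV => _ _ h _ _; apply: complex_Re_real; case: (h x). Qed.

Lemma nsq_ge0 x : 0 <= nsq x.
Proof. by case: HV => _ _ h _ _; case: (h x). Qed.

Lemma inner_self_eq0 x : inner x x = 0 -> x = 0.
Proof. by case: HV => _ _ _ h _; apply: h. Qed.

Lemma nsq_eq0 x : nsq x = 0 -> x = 0.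
Proof. by move=> h; apply: inner_self_eq0; rewrite inner_self h. Qed.

Lemma nsq0 : nsq 0 = 0.
Proof. by rewrite /Defs.nsq inner0l. Qed.

Lemma inner_orth_self x : (forall y, inner x y = 0) -> x = 0.
Proof. by move=> h; apply: inner_self_eq0; rewrite h. Qed.

Lemma inner_inj_l x1 x2 : (forall y, inner x1 y = inner x2 y) -> x1 = x2.
Proof.
move=> h; apply/eqP; rewrite -subr_eq0; apply/eqP; apply: inner_orth_self => y.
by rewrite innerBl h subrr.
Qed.

Lemma nsqD x y : nsq (x + y) = nsq x + nsq y + 2 * complex.Re (inner x y).
Proof. by rewrite /Defs.nsq innerDl !innerDr !ReD (Re_innerC x y); ring. Qed.

Lemma nsqN x : nsq (- x) = nsq x.
Proof. by rewrite /Defs.nsq innerNl innerNr opprK. Qed.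

Lemma nsqZ_real (a : R) x : nsq (a%:C *: x) = a ^+ 2 * nsq x.
Proof.
rewrite /Defs.nsq innerZl innerZr [conjc _]conjc_Im0 // mulrA -rmorphM Re_realM.
by rewrite expr2.
Qed.

Lemma Re_inner_young (d : R) x y :
  2 * d * complex.Re (inner x y) <= d ^+ 2 * nsq x + nsq y.
Proof.
have := nsq_ge0 (d%:C *: x - y).
by rewrite nsqD nsqN nsqZ_real innerNr innerZl ReN Re_realM; lra.
Qed.

Lemma nsqD_le2 x y : nsq (x + y) <= 2 * nsq x + 2 * nsq y.
Proof. by have := Re_inner_young 1 x y; rewrite nsqD; lra. Qed.

Lemma nsqB_le2 x y : nsq (x - y) <= 2 * nsq x + 2 * nsq y.
Proof. by have := nsqD_le2 x (- y); rewrite nsqN. Qed.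

Lemma nsqD_young (d : R) x y : 0 < d ->
  d * nsq (x + y) <= (d + d ^+ 2) * nsq x + (1 + d) * nsq y.
Proof.
move=> d_gt0; have := Re_inner_young d x y; rewrite nsqD.
have := nsq_ge0 y; nra.
Qed.

End InnerProduct.

Section ClosureRange.
Variables (R : realType) (V : lmodType R[i]) (inner : V -> V -> R[i]).
Hypothesis HV : is_hilbert inner.
Local Notation nsq := (nsq inner).
Variable A : V -> V.
Local Notation M := (closure_range inner A).

Lemma closure_range_self x : M (A x).
Proof. by move=> e e_gt0; exists x; rewrite subrr nsq0. Qed.

Lemma closure_rangeB : (forall x y, A (x - y) = A x - A y) ->
  forall m1 m2, M m1 -> M m2 -> M (m1 - m2).
Proof.
move=> AB m1 m2 M1 M2 e e_gt0.
have e4_gt0 : 0 < e / 4 by rewrite divr_gt0.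
have [y1 hy1] := M1 _ e4_gt0; have [y2 hy2] := M2 _ e4_gt0.
exists (y1 - y2); rewrite AB.
have -> : m1 - m2 - (A y1 - A y2) = (m1 - A y1) - (m2 - A y2).
  by rewrite !opprB addrACA [RHS]addrACA [- A y1 + _]addrC.
by apply: le_lt_trans (nsqB_le2 HV _ _) _; lra.
Qed.

Lemma orth_closure_range w m :
  (forall x, inner w (A x) = 0) -> M m -> inner w m = 0.
Proof.
move=> w_orth Mm; set t := inner w m.
have Re_le0 w' : (forall x, inner w' (A x) = 0) -> complex.Re (inner w' m) <= 0.
  move=> w'_orth; apply: (ler_add_eps_mul (c := nsq w' + 1)) => d d_gt0 _.
  have [y hy] := Mm (d ^+ 2) (exprn_gt0 2 d_gt0).
  have := Re_inner_young HV d w' (m - A y).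
  rewrite innerBr // w'_orth subr0 add0r.
  by have := nsq_ge0 HV w'; nra.
(* For [w' := conjc t *: w] the bound reads [|t|^2 <= 0]. *)
have t_le0 : complex.Re (inner (conjc t *: w) m) <= 0.
  by apply: Re_le0 => x; rewrite innerZl // w_orth mulr0.
rewrite innerZl // Re_conjcM in t_le0.
by apply/eqP; rewrite eq_complex /=; apply/andP; split; apply/eqP; nra.
Qed.

Lemma closure_range_inner_inj m1 m2 : M m1 -> M m2 ->
  (forall m, M m -> inner m1 m = inner m2 m) -> m1 = m2.
Proof.
move=> M1 M2 h; apply/eqP; rewrite -subr_eq0; apply/eqP.
apply: (inner_self_eq0 HV).
by rewrite (innerBr HV) !(innerBl HV) !h // !subrr.
Qed.

Lemma contraction_on_closure_range (S : V -> V) (K : R) :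
  (forall x y, S (x - y) = S x - S y) -> 0 <= K ->
  (forall x, nsq (S x) <= K * nsq x) ->
  (forall x, nsq (S (A x)) <= nsq (A x)) -> contraction_on inner M S.
Proof.
move=> SB K_ge0 S_bound S_contr y My.
(* With [u := A x] and [|y - u|^2 < d^2], the weighted triangle inequalities
   [nsqD_young] give [|S y|^2 <= |y|^2 + O(d)]. *)
apply: (ler_add_eps_mul (c := 3 * nsq y + 4 + 2 * K)) => d d_gt0 d_le1.
have [x hx] := My (d ^+ 2) (exprn_gt0 2 d_gt0).
set u := A x in hx; set e := y - u in hx.
have Sy : S y = S u + S e by rewrite /e SB addrC subrK.
have hSy := nsqD_young HV (S u) (S e) d_gt0; rewrite -Sy in hSy.
have hu := nsqD_young HV y (- e) d_gt0.
have ye : y - e = u by rewrite /e opprB addrC subrK.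
rewrite (nsqN HV) ye in hu.
have hSu : nsq (S u) <= nsq u := S_contr x.
have hSe : nsq (S e) <= K * nsq e := S_bound e.
have d2_le_d : d ^+ 2 <= d by rewrite expr2 ger_pMr.
have hE : nsq e <= d ^+ 2 by apply: ltW.
have hE0 := nsq_ge0 HV e; have hY0 := nsq_ge0 HV y.
have hdX : d * nsq (S y) <= d * (nsq y + d * (3 * nsq y + 4 + 2 * K)).
  apply: (le_trans hSy).
  have Su_le : (d + d ^+ 2) * nsq (S u) <= (1 + d) * ((d + d ^+ 2) * nsq y + (1 + d) * nsq e).
    apply: le_trans (_ : (d + d ^+ 2) * nsq u <= _); last by nra.
    by rewrite ler_wpM2l // addr_ge0 ?exprn_ge0 ?ltW.
  have Se_le : (1 + d) * nsq (S e) <= (1 + d) * (K * nsq e).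
    by rewrite ler_wpM2l // addr_ge0 ?ltW.
  have hdE : (1 + d) * nsq e <= 2 * d ^+ 2 by nra.
  have KE_le : (1 + d) * (K * nsq e) <= 2 * K * d ^+ 2.
    by have := ler_wpM2l K_ge0 hdE; lra.
  have E_le : (1 + d) * ((1 + d) * nsq e) <= 4 * d ^+ 2.
    by have := ler_wpM2l (ler_wpDr (ltW d_gt0) ler01) hdE; nra.
  have Y_le : (1 + d) * (d + d ^+ 2) * nsq y <= (d + 3 * d ^+ 2) * nsq y.
    by apply: ler_wpM2r => //; nra.
  nra.
by rewrite -(ler_pM2l d_gt0).
Qed.

Lemma cni_of_stable_on_range (S : V -> V) :
  (forall x y, A (x - y) = A x - A y) ->
  (forall x y, S (x - y) = S x - S y) -> maps_into M S ->
  contraction_on inner M S ->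
  (forall x, exists C, forall n, n%:R * nsq (iter n S (A x)) <= C) ->
  completely_non_isometric_on inner M S.
Proof.
move=> AB SB SM S_contr stable N _ _ NM NS N_iso z Nz.
have iterB n a b : iter n S (a - b) = iter n S a - iter n S b.
  by elim: n => //= n ->; rewrite SB.
have iter_contr n m : M m -> nsq (iter n S m) <= nsq m.
  move=> Mm; suff [] : M (iter n S m) /\ nsq (iter n S m) <= nsq m by [].
  elim: n => [|n [IHM IHle]] //=; split; first exact: SM.
  exact: le_trans (S_contr _ IHM) IHle.
have iter_iso n : N (iter n S z) /\ nsq (iter n S z) = nsq z.
  by elim: n => [|n [IHN IHeq]] //=; split; [exact: NS | rewrite N_iso].
apply: (nsq_eq0 HV); apply/eqP; rewrite eq_le nsq_ge0 // andbT.
apply: (ler_add_eps_mul (c := 2)) => e e_gt0 _.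
have [x hx] := NM z Nz e e_gt0.
have [C hC] := stable x.
(* [|z|^2 = |S^n z|^2 <= 2 e + 2 |S^n (A x)|^2], and the last term is O(1/n). *)
rewrite add0r -subr_le0; apply: (le0_natrM_bounded (c := 2 * C)) => n.
have [_ <-] := iter_iso n.
have -> : iter n S z = iter n S (z - A x) + iter n S (A x) by rewrite iterB subrK.
have := nsqD_le2 HV (iter n S (z - A x)) (iter n S (A x)).
have : nsq (iter n S (z - A x)) <= e.
  apply: le_trans (ltW hx); apply: iter_contr.
  exact: closure_rangeB (NM z Nz) (closure_range_self x).
have := hC n; have n_ge0 : 0 <= n%:R :> R by [].
nra.
Qed.

End ClosureRange.

Section Projection.
Variables (R : realType) (V : lmodType R[i]) (inner : V -> V -> R[i]).
Hypothesis HV : is_hilbert inner.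
Local Notation nsq := (nsq inner).
Variables (M : V -> Prop) (P : V -> V).
Hypothesis HP : orth_proj inner M P.

Lemma proj_mem x : M (P x).
Proof. by case: (HP x). Qed.

Lemma proj_orth x m : M m -> inner (x - P x) m = 0.
Proof. by case: (HP x) => _; apply. Qed.

Lemma inner_proj x m : M m -> inner (P x) m = inner x m.
Proof. by move=> Mm; apply/eqP; rewrite eq_sym -subr_eq0 -(innerBl HV) proj_orth. Qed.

Lemma projB x y : P (x - y) = P x - P y.
Proof.
apply/eqP; rewrite -subr_eq0; apply/eqP; apply: (inner_self_eq0 HV).
have orthM m : M m -> inner (P (x - y) - (P x - P y)) m = 0.
  by move=> Mm; rewrite !(innerBl HV) !inner_proj // (innerBl HV) subrr.
by rewrite !(innerBr HV) !orthM ?subrr //; apply: proj_mem.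
Qed.

Lemma proj_nsq_le x : nsq (P x) <= nsq x.
Proof.
have -> : nsq x = nsq (P x + (x - P x)) by rewrite addrC subrK.
rewrite (nsqD HV) (innerC HV (x - P x)) proj_orth; last exact: proj_mem.
by rewrite rmorph0 mulr0 addr0 lerDl nsq_ge0.
Qed.

Definition orth_in_kernel (C : V -> V) :=
  forall w, (forall m, M m -> inner w m = 0) -> C w = 0.

Variable C : {linear V -> V}.
Hypothesis C_selfadj : forall x y, inner (C x) y = inner x (C y).
Hypothesis C_orth : orth_in_kernel C.

Lemma orth_in_kernel_proj x : C (P x) = C x.
Proof.
by apply/eqP; rewrite eq_sym -subr_eq0 -linearB C_orth // => m; apply: proj_orth.
Qed.

Lemma orth_in_kernel_mem x : M (C x).
Proof.
suff <- : P (C x) = C x by apply: proj_mem.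
apply/eqP; rewrite eq_sym -subr_eq0; apply/eqP; apply: (inner_self_eq0 HV).
rewrite (innerBr HV) -C_selfadj linearB orth_in_kernel_proj subrr inner0l //.
by rewrite proj_orth ?subrr //; apply: proj_mem.
Qed.

End Projection.

Section SquareRoot.
Variables (R : realType) (V : lmodType R[i]) (inner : V -> V -> R[i]).
Hypothesis HV : is_hilbert inner.
Local Notation nsq := (nsq inner).

Lemma pos_op_selfadj (B : {linear V -> V}) : pos_op inner B ->
  forall x y, inner (B x) y = inner x (B y).
Proof.
move=> B_pos x y.
have pos_self v : inner v (B v) = inner (B v) v.
  by rewrite (innerC HV); apply: conjc_Im0; case: (B_pos v).
pose h x y := inner (B x) y - inner x (B y).
have polar c : conjc c * h x y + c * h y x = 0.
  have := pos_self (x + c *: y).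
  rewrite linearD linearZ !(innerDl HV, innerDr HV, innerZl HV, innerZr HV).
  by rewrite !pos_self /h => /eqP; rewrite -subr_eq0 => /eqP e; rewrite -[RHS]oppr0 -e; ring.
(* [c = 1] and [c = 'i] give [h y x = - h x y] and [h y x = h x y]. *)
have polar1 := polar 1; rewrite conjc1 !mul1r in polar1.
have := polar 'i; rewrite conjc_i mulNr addrC -mulrBr => /eqP.
have i_neq0 : 'i != 0 :> R[i] by rewrite eq_complex /= oner_eq0 andbF.
rewrite mulf_eq0 (negbTE i_neq0) /= subr_eq0 => /eqP hyx.
apply/eqP; rewrite -subr_eq0; apply/eqP.
by move: polar1; rewrite hyx -mulr2n => /eqP; rewrite mulrn_eq0 /= => /eqP.
Qed.

Variables (A : V -> V) (B : {linear V -> V}).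
Hypothesis B_pos : pos_op inner B.
Hypothesis B_sqr : forall x, B (B x) = A x.
Local Notation M := (closure_range inner A).

Lemma sqrt_inner x y : inner (A x) y = inner (B x) (B y).
Proof. by rewrite -B_sqr (pos_op_selfadj B_pos). Qed.

Lemma sqrt_nsq x : nsq (B x) = complex.Re (inner (A x) x).
Proof. by rewrite /Defs.nsq -B_sqr [in RHS](pos_op_selfadj B_pos). Qed.

Lemma sqrt_kernel w : A w = 0 -> B w = 0.
Proof. by move=> Aw; apply: (nsq_eq0 HV); rewrite sqrt_nsq Aw inner0l. Qed.

Lemma sqrt_orth_in_kernel : orth_in_kernel inner M B.
Proof.
move=> w w_orth; apply: (nsq_eq0 HV).
by rewrite sqrt_nsq (innerC HV) w_orth ?conjc0 //; apply: closure_range_self.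
Qed.

Lemma sqrt_inj_closure_range m1 m2 : M m1 -> M m2 -> B m1 = B m2 -> m1 = m2.
Proof.
move=> M1 M2 Bm; apply/eqP; rewrite -subr_eq0; apply/eqP.
have orth x : inner (m1 - m2) (A x) = 0.
  by rewrite -B_sqr -(pos_op_selfadj B_pos) linearB Bm subrr inner0l.
apply: (inner_self_eq0 HV).
by rewrite (innerBr HV) !(orth_closure_range HV orth) // subrr.
Qed.

End SquareRoot.

Lemma alt_binomial_sumS (Z : comPzRingType) (g : nat -> Z) n :
  \sum_(k < n.+2) ((-1) ^+ k * 'C(n.+1, k)%:R) * g k =
  \sum_(k < n.+1) ((-1) ^+ k * 'C(n, k)%:R) * g k
  - \sum_(k < n.+1) ((-1) ^+ k * 'C(n, k)%:R) * g k.+1.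
Proof.
have shift : \sum_(k < n.+1) ((-1) ^+ k * 'C(n, k)%:R) * g k =
    \sum_(k < n.+2) ((-1) ^+ k * 'C(n, k)%:R) * g k.
  by rewrite [RHS]big_ord_recr /= bin_small // mulr0 mul0r addr0.
have pascal (k : nat) : (-1) ^+ k.+1 * 'C(n.+1, k.+1)%:R * g k.+1 =
    (-1) ^+ k.+1 * 'C(n, k.+1)%:R * g k.+1 - (-1) ^+ k * 'C(n, k)%:R * g k.+1.
  by rewrite binS natrD exprS; ring.
rewrite shift big_ord_recl [X in _ = X - _]big_ord_recl !bin0.
under eq_bigr => k _ do rewrite lift0 pascal.
under [X in _ = _ + X - _]eq_bigr => k _ do rewrite lift0.
by rewrite sumrB addrA.
Qed.

Section HyperexpansiveForms.
Variables (R : realType) (V : lmodType R[i]) (inner : V -> V -> R[i]).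
Hypothesis HV : is_hilbert inner.
Variables (T : {linear V -> V}) (Tstar : V -> V).
Hypothesis HTs : is_adjoint inner T Tstar.
Local Notation A := (Aop T Tstar).

Definition quadA n x := complex.Re (inner (A n x) x).

Lemma inner_iter_adjoint k u y : inner (iter k Tstar u) y = inner u (iter k T y).
Proof.
elim: k u y => [//|k IH] u y.
by rewrite iterS (innerC HV) -HTs -(innerC HV) IH -iterSr.
Qed.

Lemma inner_Aop n x y : inner (A n x) y =
  - \sum_(k < n.+1) ((-1) ^+ k * 'C(n, k)%:R) * inner (iter k T x) (iter k T y).
Proof.
rewrite /Aop (innerNl HV) (inner_suml HV); congr (- _); apply: eq_bigr => k _.
by rewrite (innerZl HV) inner_iter_adjoint.
Qed.

Lemma inner_AopS n x y :
  inner (A n.+1 x) y = inner (A n x) y - inner (A n (T x)) (T y).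
Proof.
rewrite !inner_Aop (alt_binomial_sumS (fun k => inner (iter k T x) (iter k T y))).
rewrite opprD !opprK; congr (_ + _).
by apply: eq_bigr => k _; rewrite -!iterSr.
Qed.

Lemma AopB n x y : A n (x - y) = A n x - A n y.
Proof.
have iterTB k : iter k T (x - y) = iter k T x - iter k T y.
  by elim: k => //= k ->; rewrite linearB.
apply: (inner_inj_l HV) => z; rewrite (innerBl HV) !inner_Aop -opprD -sumrB.
by congr (- _); apply: eq_bigr => k _; rewrite iterTB (innerBl HV) mulrBr.
Qed.

Lemma quadAS n x : quadA n.+1 x = quadA n x - quadA n (T x).
Proof. by rewrite /quadA inner_AopS ReB. Qed.

Hypothesis Hche : completely_hyperexpansive inner T Tstar.

Lemma quadA_ge0 n x : (0 < n)%N -> 0 <= quadA n x.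
Proof. by move=> n_gt0; case: (Hche n_gt0 x). Qed.

Lemma quadA2_T_le x : quadA 2 (T x) <= quadA 2 x.
Proof. by have := quadA_ge0 x (isT : (0 < 3)%N); rewrite quadAS subr_ge0. Qed.

Lemma quadA_iter_bound j x :
  j%:R * quadA 2 (iter j T x) + quadA 1 (iter j T x) <= quadA 1 x.
Proof.
elim: j => [|j IH]; first by rewrite mul0r add0r.
apply: le_trans IH; rewrite iterS -natr1 mulrDl mul1r.
have := quadAS 1 (iter j T x); have := quadA2_T_le (iter j T x).
have : 0 <= j%:R :> R by [].
nra.
Qed.

Lemma quadA3_eq0 x : quadA 3 x = 0 -> quadA 2 x = 0.
Proof.
move=> q3x.
have q3_iter j : quadA 3 (iter j T x) = 0.
  elim: j => [//|j IH]; rewrite iterS.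
  have := quadAS 3 (iter j T x); have := quadA_ge0 (iter j T x) (isT : (0 < 4)%N).
  by have := quadA_ge0 (T (iter j T x)) (isT : (0 < 3)%N); lra.
have q2_iter j : quadA 2 (iter j T x) = quadA 2 x.
  by elim: j => [//|j IH]; have := quadAS 2 (iter j T x); rewrite -iterS q3_iter IH; lra.
apply/eqP; rewrite eq_le quadA_ge0 // andbT.
apply: (le0_natrM_bounded (c := quadA 1 x)) => n.
have := quadA_iter_bound n x; rewrite q2_iter.
by have := quadA_ge0 (iter n T x) (isT : (0 < 1)%N); lra.
Qed.

End HyperexpansiveForms.

Section Compression.
Variables (R : realType) (V : lmodType R[i]) (inner : V -> V -> R[i]).
Hypothesis HV : is_hilbert inner.
Local Notation nsq := (nsq inner).
Variables (T : {linear V -> V}) (Tstar : V -> V).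
Hypothesis T_bounded : bounded inner T.
Hypothesis T_adj : is_adjoint inner T Tstar.
Hypothesis T_che : completely_hyperexpansive inner T Tstar.
Local Notation A := (Aop T Tstar).
Local Notation quadA := (quadA inner T Tstar).
Local Notation M := (closure_range inner (A 2)).
Variable B : {linear V -> V}.
Hypothesis B_pos : pos_op inner B.
Hypothesis B_sqr : forall x, B (B x) = A 2 x.
Hypothesis B_reg : forall x, A 2 (T x) = B (T (B x)).
Variable P : V -> V.
Hypothesis HP : orth_proj inner M P.
Local Notation S := (fun x => P (T x)).

Let B_selfadj := pos_op_selfadj HV B_pos.
Let B_orth := sqrt_orth_in_kernel HV B_pos B_sqr.
Let B_mem := orth_in_kernel_mem HV HP B_selfadj B_orth.

Lemma compressionB x y : P (T (x - y)) = P (T x) - P (T y).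
Proof. by rewrite linearB (projB HV HP). Qed.

Lemma sqrt_compression x : B (P (T x)) = B (T x).
Proof. exact: (orth_in_kernel_proj HP B_orth). Qed.

Lemma compression_sqrt x : P (T (B x)) = B (T x).
Proof.
apply: (sqrt_inj_closure_range HV B_pos B_sqr).
- exact: (proj_mem HP).
- exact: B_mem.
by rewrite sqrt_compression B_sqr B_reg.
Qed.

Lemma sqrt_compression_comm x : B (P (T x)) = P (T (B x)).
Proof. by rewrite sqrt_compression compression_sqrt. Qed.

Lemma iter_compression_sqrt n x : iter n S (B x) = B (iter n T x).
Proof. by elim: n => //= n ->; rewrite compression_sqrt. Qed.

Lemma nsq_sqrt x : nsq (B x) = quadA 2 x.
Proof. exact: (sqrt_nsq HV B_pos B_sqr). Qed.

Lemma compression_contraction : contraction_on inner M S.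
Proof.
have [K T_K] := T_bounded.
apply: (contraction_on_closure_range HV (K := `|K|)) => //.
- exact: compressionB.
- move=> x; apply: le_trans (proj_nsq_le HV HP _) _; apply: le_trans (T_K x) _.
  by rewrite ler_wpM2r ?(nsq_ge0 HV) ?ler_norm.
- move=> x; rewrite -!B_sqr compression_sqrt !nsq_sqrt.
  exact: (quadA2_T_le HV T_adj T_che).
Qed.

Lemma compression_cni : completely_non_isometric_on inner M S.
Proof.
apply: (cni_of_stable_on_range HV).
- exact: (AopB HV T_adj).
- exact: compressionB.
- by move=> x _; apply: (proj_mem HP).
- exact: compression_contraction.
move=> x; exists (quadA 1 (B x)) => n.
rewrite -B_sqr iter_compression_sqrt nsq_sqrt.
have := quadA_iter_bound HV T_adj T_che n (B x).
by have := quadA_ge0 T_che (iter n T (B x)) (isT : (0 < 1)%N); lra.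
Qed.

Lemma inner_Aop3 x y :
  inner (A 3 x) y = inner (B x) (B y) - inner (B (T x)) (B (T y)).
Proof. by rewrite (inner_AopS HV T_adj) !(sqrt_inner HV B_pos B_sqr). Qed.

Lemma Aop3_kernel w : B w = 0 -> A 3 w = 0.
Proof.
move=> Bw.
have BTw : B (T w) = 0.
  apply: (nsq_eq0 HV); apply/eqP; rewrite eq_le nsq_ge0 // andbT.
  rewrite nsq_sqrt; apply: le_trans (quadA2_T_le HV T_adj T_che w) _.
  by rewrite -nsq_sqrt Bw nsq0.
by apply: (inner_inj_l HV) => y; rewrite inner_Aop3 Bw BTw !(inner0l HV) subrr.
Qed.

Lemma Aop3_inj_closure_range m1 m2 : M m1 -> M m2 -> A 3 m1 = A 3 m2 -> m1 = m2.
Proof.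
move=> M1 M2 Am; apply: (sqrt_inj_closure_range HV B_pos B_sqr) => //.
apply/eqP; rewrite -subr_eq0 -linearB; apply/eqP/(nsq_eq0 HV).
rewrite nsq_sqrt (quadA3_eq0 HV T_adj T_che) //.
by rewrite /quadA (AopB HV T_adj) Am subrr (inner0l HV).
Qed.

Variable B3 : {linear V -> V}.
Hypothesis B3_pos : pos_op inner B3.
Hypothesis B3_sqr : forall x, B3 (B3 x) = A 3 x.
Hypothesis B3_reg : forall x, A 3 (T x) = B3 (T (B3 x)).

Let B3_selfadj := pos_op_selfadj HV B3_pos.

Lemma sqrt3_orth_in_kernel : orth_in_kernel inner M B3.
Proof.
move=> w w_orth; apply: (sqrt_kernel HV B3_pos B3_sqr).
by apply: Aop3_kernel; apply: B_orth.
Qed.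

Lemma sqrt3_T x : B3 (T x) = P (T (B3 x)).
Proof.
apply: Aop3_inj_closure_range.
- exact: (orth_in_kernel_mem HV HP B3_selfadj sqrt3_orth_in_kernel).
- exact: (proj_mem HP).
rewrite -!B3_sqr (orth_in_kernel_proj HP sqrt3_orth_in_kernel).
by congr (B3 _); rewrite B3_sqr B3_reg.
Qed.

Lemma Aop3_T x : A 3 (T x) = P (T (A 3 x)).
Proof. by rewrite B3_reg sqrt3_T -B3_sqr -sqrt3_T. Qed.

Section Adjoint.
Variable Sstar : V -> V.
Hypothesis Sstar_mem : maps_into M Sstar.
Hypothesis Sstar_adj : forall x y, M x -> M y -> inner (P (T x)) y = inner x (Sstar y).

Let S_mem x : M (P (T x)) := proj_mem HP (T x).

Lemma sqrt_adjoint_comm m : M m -> B (Sstar m) = Sstar (B m).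
Proof.
move=> Mm; apply: (closure_range_inner_inj HV (B_mem _) (Sstar_mem (B_mem m))).
move=> m' Mm'; rewrite B_selfadj (innerC HV (B m')) -(Sstar_adj (B_mem m') Mm).
rewrite -sqrt_compression_comm B_selfadj (Sstar_adj Mm' (B_mem m)).
by rewrite -(innerC HV).
Qed.

Definition defect m := m - Sstar (P (T m)).

Lemma defect_mem m : M m -> M (defect m).
Proof.
by move=> Mm; apply: (closure_rangeB HV (AopB HV T_adj 2) Mm (Sstar_mem (S_mem m))).
Qed.

Lemma defect_selfadj m m' : M m -> M m' -> inner (defect m) m' = inner m (defect m').
Proof.
move=> Mm Mm'; rewrite (innerBl HV) (innerBr HV); congr (_ - _).
rewrite (innerC HV m') -(Sstar_adj Mm' (S_mem m)) -(innerC HV).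
by rewrite (Sstar_adj Mm (S_mem m')).
Qed.

Lemma Aop3_defect x : A 3 x = B (defect (B x)).
Proof.
apply: (inner_inj_l HV) => y.
rewrite inner_Aop3 [RHS]B_selfadj defect_selfadj ?B_mem // (innerBr HV).
by rewrite -(Sstar_adj (B_mem x) (S_mem (B y))) !compression_sqrt.
Qed.

Lemma sqrt_defect m : M m -> B (defect m) = defect (B m).
Proof.
move=> Mm; rewrite /defect linearB sqrt_adjoint_comm ?S_mem //.
by rewrite sqrt_compression_comm.
Qed.

Lemma defect_compression_sqrt x : defect (P (T (B x))) = P (T (defect (B x))).
Proof.
apply: (sqrt_inj_closure_range HV B_pos B_sqr); [exact: defect_mem | exact: S_mem |].
by rewrite compression_sqrt -Aop3_defect sqrt_compression_comm -Aop3_defect Aop3_T.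
Qed.

Lemma defect_compression m : M m -> defect (P (T m)) = P (T (defect m)).
Proof.
move=> Mm; apply: (sqrt_inj_closure_range HV B_pos B_sqr); [exact: defect_mem | exact: S_mem |].
rewrite sqrt_defect // sqrt_compression_comm defect_compression_sqrt.
by rewrite sqrt_compression_comm sqrt_defect.
Qed.

End Adjoint.

Lemma compression_quasinormal : quasinormal_on inner M S.
Proof.
move=> Sstar [Sstar_mem Sstar_adj] x Mx.
have := defect_compression Sstar_mem Sstar_adj Mx.
by rewrite /defect compressionB => /eqP; rewrite (inj_eq (addrI _)) eqr_opp => /eqP.
Qed.

End Compression.

Lemma regular_linear_sqrt (R : realType) (V : lmodType R[i]) (inner : V -> V -> R[i])
    (A T : V -> V) :
  regular inner A T -> exists B : {linear V -> V},
    [/\ pos_op inner B, forall x, B (B x) = A x & forall x, A (T x) = B (T (B x))].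
Proof.
move=> [B [[B_lin [_ [B_pos B_sqr]]] B_reg]].
pose Bl : {linear V -> V} := HB.pack B (GRing.isLinear.Build _ _ _ _ B B_lin).
by exists Bl.
Qed.

Theorem corollary4p6 (R : realType) (V : lmodType R[i]) (inner : V -> V -> R[i])
  (HV : is_hilbert inner)
  (T : {linear V -> V}) (Tstar : V -> V)
  (HTb : bounded inner T) (HTs : is_adjoint inner T Tstar)
  (Hche : completely_hyperexpansive inner T Tstar)
  (Hreg : forall j, (1 <= j <= 3)%N -> regular inner (Aop T Tstar j) T)
  (P : V -> V)
  (HP : orth_proj inner (closure_range inner (Aop T Tstar 2)) P) :
  let M := closure_range inner (Aop T Tstar 2) in
  let S := fun x => P (T x) in
  [/\ maps_into M S,
      contraction_on inner M S,
      quasinormal_on inner M S &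
      completely_non_isometric_on inner M S].
Proof.
move=> M S.
have [B [B_pos B_sqr B_reg]] := regular_linear_sqrt (Hreg 2%N isT).
have [B3 [B3_pos B3_sqr B3_reg]] := regular_linear_sqrt (Hreg 3%N isT).
split.
- by move=> x _; apply: (proj_mem HP).
- exact: (compression_contraction HV HTb HTs Hche B_pos B_sqr B_reg HP).
- exact: (compression_quasinormal HV HTs Hche B_pos B_sqr B_reg HP B3_pos B3_sqr B3_reg).
- exact: (compression_cni HV HTb HTs Hche B_pos B_sqr B_reg HP).
Qed.
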